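(* Let $n_1,n_2\ge 1$ be integers, $n=n_1+n_2$, and consider a uniformly random arrangement of $n_1$ symbols $x$ and $n_2$ symbols $y$ (all $\binom{n}{n_1}$ arrangements equally likely). Let $R_1$ and $R_2$ be the numbers of runs of $x$'s and of $y$'s, respectively, $R_m=\min(R_1,R_2)$ and $R_M=\max(R_1,R_2)$. Then $$\mathrm{Cov}(R_m,R_M)=\frac{n_1n_2(n_1-1)(n_2-1)}{n(n-1)^2}.$$
   Context: A run is a maximal block of consecutive identical symbols in the arrangement. *)

From HB Require Import structures.
From mathcomp Require Import all_boot all_order all_algebra.
Set Implicit Arguments. Unset Strict Implicit. Unset Printing Implicit Defensive.
Import Order.TTheory GRing.Theory Num.Theory.

(* An arrangement of n symbols: a tuple of booleans, true = x, false = y. *)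

(* Number of runs of symbol b in s: positions i holding b that either start
   the sequence or are preceded by a different symbol (start of a maximal block). *)
Definition runs (b : bool) (s : seq bool) : nat :=
  \sum_(i < size s | (nth b s i == b) && ((val i == 0) || (nth b s (val i).-1 != b))) 1.

Definition arrangements (n1 n2 : nat) : {set (n1 + n2).-tuple bool} :=
  [set t : (n1 + n2).-tuple bool | count id t == n1].

Local Open Scope ring_scope.

Definition uexp (T : finType) (A : {set T}) (f : T -> rat) : rat :=
  (\sum_(t in A) f t) / #|A|%:R.

Definition ucov (T : finType) (A : {set T}) (f g : T -> rat) : rat :=
  uexp A (fun t => f t * g t) - uexp A f * uexp A g.

Definition Rmin (n : nat) (t : n.-tuple bool) : rat :=
  (minn (runs true t) (runs false t))%:R.
Definition Rmax (n : nat) (t : n.-tuple bool) : rat :=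
  (maxn (runs true t) (runs false t))%:R.

(* In a nonempty arrangement with C changes of symbol, R1 + R2 = C + 1, and
   |R1 - R2| is 1 or 0 according as the first and last symbols agree (D = 1) or
   not.  Hence R_m = (C + 1 - D) / 2, R_M = (C + 1 + D) / 2 and, D being an
   indicator, Cov(R_m, R_M) = (Var C - Var D) / 4.  The moments
   E C = 2 n1 n2 / n,  E C^2 = 2 n1 n2 (2 n1 n2 - 1) / (n (n - 1)) and
   E D = (n1 (n1 - 1) + n2 (n2 - 1)) / (n (n - 1)) follow by induction on
   (n1, n2), splitting the arrangements according to their first symbol. *)

From mathcomp Require Import all_boot all_order all_algebra.
From mathcomp Require Import ring lra zify.
Import Order.TTheory GRing.Theory Num.Theory.
Set Implicit Arguments. Unset Strict Implicit. Unset Printing Implicit Defensive.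

Fixpoint runs_after (b p : bool) (s : seq bool) : nat :=
  if s is d :: s' then ((d == b) && (p != b)) + runs_after b d s' else 0.

Fixpoint switches_after (p : bool) (s : seq bool) : nat :=
  if s is d :: s' then (d != p) + switches_after d s' else 0.

Definition switches (s : seq bool) : nat :=
  if s is c :: s' then switches_after c s' else 0.

Definition same_ends (s : seq bool) : bool :=
  if s is c :: s' then last c s' == c else false.

Lemma runs_cons b c s : runs b (c :: s) = (c == b) + runs_after b c s.
Proof.
have sum_after p t : \sum_(i < size t | (nth b t i == b) && (nth b (p :: t) i != b)) 1
    = runs_after b p t.
  by elim: t p => [|d t IHt] p; rewrite ?big_ord0 // big_mkcond big_ord_recl -big_mkcond IHt.
rewrite /runs big_mkcond big_ord_recl /= -big_mkcond sum_after.
by case: (c == b).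
Qed.

Lemma runs_after_switches p s :
  runs_after true p s + runs_after false p s = switches_after p s.
Proof. by elim: s p => [|d s IHs] p //=; rewrite -IHs; case: d; case: p => /=; lia. Qed.

Lemma runs_after_last b p s :
  runs_after b p s + (p == b) = runs_after (~~ b) p s + (last p s == b).
Proof.
elim: s p => [|d s IHs] p /=; first by rewrite addnC.
by move: (IHs d); case: b d p IHs => [] [] [] _ /=; lia.
Qed.

Lemma switches_cons c s : switches (c :: s) = switches s + (head c s != c).
Proof. by case: s => [|d s] /=; rewrite ?eqxx // addnC. Qed.

Lemma runs_min_max s : size s > 0 ->
  minn (runs true s) (runs false s) * 2 + same_ends s = (switches s).+1 /\
  maxn (runs true s) (runs false s) * 2 = (switches s).+1 + same_ends s.
Proof.
case: s => [|c s] //= _; rewrite !runs_cons.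
move: (runs_after_last c c s) (runs_after_switches c s).
by case: c => /=; rewrite /minn /maxn; case: ltnP; lia.
Qed.

Fixpoint arrs (n k : nat) : seq (seq bool) :=
  if n is n'.+1 then
    (if k is k'.+1 then map (cons true) (arrs n' k') else [::])
      ++ map (cons false) (arrs n' k)
  else if k == 0 then [:: [::]] else [::].

Lemma mem_arrs n k s : (s \in arrs n k) = (size s == n) && (count id s == k).
Proof.
elim: n k s => [|n IHn] k s /=; first by case: k; case: s.
rewrite mem_cat; case: s => [|[] s] /=.
- by apply/negP; case/orP => [|/mapP [] //]; case: k => // k /mapP [].
- rewrite (negbTE (introN mapP _)); last by case.
  case: k => [|k] /=; first by rewrite andbF.
  by rewrite orbF mem_map ?IHn //; move=> ? ? [].
rewrite mem_map; last by move=> ? ? [].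
case: k => [|k] /=; first by rewrite IHn.
by rewrite (negbTE (introN mapP _)) ?IHn //; case.
Qed.

Lemma uniq_arrs n k : uniq (arrs n k).
Proof.
have cons_inj (b : bool) : injective (cons b) by move=> ? ? [].
elim: n k => [|n IHn] [|k] //=; first by rewrite map_inj_uniq.
rewrite cat_uniq !map_inj_uniq // !IHn andbT /=.
by apply/hasPn => _ /mapP [s _ ->]; apply/negP => /mapP [].
Qed.

Lemma size_arrs n k : size (arrs n k) = 'C(n, k).
Proof.
elim: n k => [|n IHn] [|k] //=; first by rewrite size_map IHn !bin0.
by rewrite size_cat !size_map !IHn binS addnC.
Qed.

Lemma arrs_small n k : n < k -> arrs n k = [::].
Proof. by move=> ltnk; apply/size0nil; rewrite size_arrs bin_small. Qed.

Lemma arrs0 n : arrs n 0 = [:: nseq n false].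
Proof. by elim: n => //= n ->. Qed.

Lemma arrsnn n : arrs n n = [:: nseq n true].
Proof. by elim: n => //= n ->; rewrite arrs_small. Qed.

Definition arr (a b : nat) := arrs (a + b) a.

Lemma arr0n b : arr 0 b = [:: nseq b false].
Proof. by rewrite /arr arrs0. Qed.

Lemma arrn0 a : arr a 0 = [:: nseq a true].
Proof. by rewrite /arr addn0 arrsnn. Qed.

Local Open Scope ring_scope.

Lemma big_arr_split (V : nmodType) (f : seq bool -> V) a b : (0 < a + b)%N ->
  \sum_(s <- arr a b) f s =
  (if a is a'.+1 then \sum_(s <- arr a' b) f (true :: s) else 0) +
  (if b is b'.+1 then \sum_(s <- arr a b') f (false :: s) else 0).
Proof.
rewrite /arr; case: a => [|a]; case: b => [|b] // _.
- by rewrite add0n /= big_map add0r.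
- by rewrite !addn0 /= (arrs_small (ltnSn a)) cats0 big_map addr0.
- by rewrite (addSnnS a b) (addSn a b.+1) /= big_cat !big_map.
Qed.

Lemma big_arrangements (V : nmodType) (f : seq bool -> V) a b :
  \sum_(t in arrangements a b) f t = \sum_(s <- arr a b) f s.
Proof.
rewrite -big_enum -(big_map val xpredT); apply/perm_big/uniq_perm.
- by rewrite map_inj_uniq ?enum_uniq //; apply: val_inj.
- exact: uniq_arrs.
move=> s; rewrite mem_arrs; apply/mapP/andP => [[t]|[/eqP size_s count_s]].
  by rewrite mem_enum inE => count_t ->; rewrite size_tuple.
by exists (Tuple (introT eqP size_s)); rewrite ?mem_enum ?inE.
Qed.

Lemma card_arrangements a b : #|arrangements a b| = 'C(a + b, a).
Proof.
by rewrite -sum1_card (big_arrangements (fun=> 1%N)) sum1_size size_arrs.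
Qed.

Lemma nat2_ind (P : nat -> nat -> Prop) :
  (forall b, P 0%N b) -> (forall a, P a 0%N) ->
  (forall a b, P a b.+1 -> P a.+1 b -> P a.+1 b.+1) -> forall a b, P a b.
Proof.
move=> P0b Pa0 PSS a b; have [n] := ubnP (a + b).
elim: n a b => [|n IHn] [|a] [|b] //= ab_lt; apply: PSS; apply: IHn; lia.
Qed.

Definition narr (a b : nat) : rat := 'C(a + b, a)%:R.

Lemma narr_neq0 a b : narr a b != 0.
Proof. by rewrite pnatr_eq0 -lt0n bin_gt0 leq_addr. Qed.

Lemma narrSl a b : narr a.+1 b = (a + b).+1%:R / a.+1%:R * narr a b.
Proof.
have binS : ((a + b).+1 * 'C(a + b, a) = a.+1 * 'C(a.+1 + b, a.+1))%N.
  by rewrite addSn -mul_bin_diag.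
by rewrite /narr mulrAC -natrM binS natrM mulrAC mulfV ?mul1r // pnatr_eq0.
Qed.

Lemma narrSr a b : narr a b.+1 = (a + b).+1%:R / b.+1%:R * narr a b.
Proof.
have binS : ((a + b).+1 * 'C(a + b, a) = b.+1 * 'C(a + b.+1, a))%N.
  by have := mul_bin_down (a + b.+1) a; rewrite addnS /= => ->; rewrite -addnS addKn.
by rewrite /narr mulrAC -natrM binS natrM mulrAC mulfV ?mul1r // pnatr_eq0.
Qed.

Ltac nat_field a b :=
  have := ler0n rat a; have := ler0n rat b; rewrite -!natr1 ?natrD => ? ?;
  field; do ?[apply/andP; split]; apply: lt0r_neq0; lra.

Lemma switches_nseq c n : switches (nseq n c) = 0%N.
Proof. by case: n => //= n; elim: n => //= n ->; rewrite eqxx. Qed.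

Lemma sum_arr1 a b : \sum_(s <- arr a b) (1 : rat) = narr a b.
Proof. by rewrite -[1]/(1%:R) -natr_sum sum1_size size_arrs. Qed.

Lemma sum_arr_startT (f : seq bool -> rat) a b :
  \sum_(s <- arr a.+1 b) (head false s != false)%:R * f s =
  \sum_(s <- arr a b) f (true :: s).
Proof.
rewrite big_arr_split //; case: b => [|b]; rewrite ?addr0.
  by apply: eq_bigr => s _; rewrite /= mul1r.
rewrite [X in _ + X]big1 ?addr0 => [|s _]; last by rewrite /= mul0r.
by apply: eq_bigr => s _; rewrite /= mul1r.
Qed.

Lemma sum_arr_startF (f : seq bool -> rat) a b :
  \sum_(s <- arr a b.+1) (head true s != true)%:R * f s =
  \sum_(s <- arr a b) f (false :: s).
Proof.
rewrite big_arr_split ?addnS //; case: a => [|a]; rewrite ?add0r.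
  by apply: eq_bigr => s _; rewrite /= mul1r.
rewrite big1 ?add0r => [|s _]; last by rewrite /= mul0r.
by apply: eq_bigr => s _; rewrite /= mul1r.
Qed.

(* Since [x / 0 = 0], the closed forms below also hold when [a + b <= 1]. *)
Lemma sum_head_neq c a b :
  \sum_(s <- arr a b) (head c s != c)%:R = (if c then b else a)%:R / (a + b)%:R * narr a b.
Proof.
case: c; [case: b => [|b] | case: a => [|a]].
- by rewrite arrn0 big_seq1 /= !mul0r; case: a.
- under eq_bigr do rewrite -[_%:R]mulr1.
  rewrite sum_arr_startF sum_arr1 narrSr -addnS.
  by rewrite 2!mulrA divfK ?mulfV ?mul1r // pnatr_eq0 // addnS.
- by rewrite arr0n big_seq1 /= !mul0r; case: b.
under eq_bigr do rewrite -[_%:R]mulr1.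
rewrite sum_arr_startT sum_arr1 narrSl -addSn.
by rewrite 2!mulrA divfK ?mulfV ?mul1r // pnatr_eq0 // addSn.
Qed.

Lemma sum_switches_cons c a b :
  \sum_(s <- arr a b) (switches (c :: s))%:R =
  \sum_(s <- arr a b) (switches s)%:R + \sum_(s <- arr a b) (head c s != c)%:R :> rat.
Proof. by rewrite -big_split; apply: eq_bigr => s _; rewrite switches_cons natrD. Qed.

Lemma sum_switches a b :
  \sum_(s <- arr a b) (switches s)%:R = 2 * a%:R * b%:R / (a + b)%:R * narr a b.
Proof.
move: a b; apply: nat2_ind => [b|a|a b IHl IHr].
- by rewrite arr0n big_seq1 switches_nseq !mulr0 !mul0r.
- by rewrite arrn0 big_seq1 switches_nseq !mulr0 !mul0r.
rewrite big_arr_split // !sum_switches_cons IHl IHr !sum_head_neq /=.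
rewrite [narr a.+1 b.+1]narrSl [narr a b.+1]narrSr [narr a.+1 b]narrSl.
by rewrite !(addSn, addnS); nat_field a b.
Qed.

Lemma sum_switches_sq_cons c a b :
  \sum_(s <- arr a b) (switches (c :: s))%:R ^+ 2 =
  \sum_(s <- arr a b) (switches s)%:R ^+ 2 +
  2 * \sum_(s <- arr a b) (head c s != c)%:R * (switches s)%:R +
  \sum_(s <- arr a b) (head c s != c)%:R :> rat.
Proof.
rewrite mulr_sumr -!big_split; apply: eq_bigr => s _.
by rewrite switches_cons natrD; case: (head c s != c) => /=; ring.
Qed.

Lemma sum_switches_sq a b :
  \sum_(s <- arr a b) (switches s)%:R ^+ 2 =
  2 * a%:R * b%:R * (2 * a%:R * b%:R - 1) / ((a + b)%:R * ((a + b)%:R - 1)) * narr a b.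
Proof.
move: a b; apply: nat2_ind => [b|a|a b IHl IHr].
- by rewrite arr0n big_seq1 switches_nseq expr0n !mulr0 !mul0r.
- by rewrite arrn0 big_seq1 switches_nseq expr0n !mulr0 !mul0r.
have [/eqP|ab_gt0] := posnP (a + b).
  (* the induction hypotheses have vanishing denominators: compute on [arr 1 1] *)
  rewrite addn_eq0 => /andP [/eqP -> /eqP ->].
  by rewrite /arr /= !big_cons big_nil /narr; apply/eqP; vm_compute.
rewrite big_arr_split // !sum_switches_sq_cons sum_arr_startF sum_arr_startT.
rewrite !sum_switches_cons IHl IHr !sum_switches !sum_head_neq /=.
rewrite [narr a.+1 b.+1]narrSl [narr a b.+1]narrSr [narr a.+1 b]narrSl.
have ab_pos : 0 < a%:R + b%:R :> rat by rewrite -natrD ltr0n.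
by rewrite !(addSn, addnS); nat_field a b.
Qed.

Lemma last_nseq (c d : bool) n : last c (nseq n d) = if n is 0 then c else d.
Proof. by elim: n c => //= -[]. Qed.

Lemma sum_last c a b : (0 < a + b)%N ->
  \sum_(s <- arr a b) (last c s)%:R = a%:R / (a + b)%:R * narr a b.
Proof.
move: a b c; apply: nat2_ind => [b|a|a b IHl IHr] c ab_gt0.
- by rewrite arr0n big_seq1 last_nseq; case: b ab_gt0 => //= b; rewrite !mul0r.
- case: a ab_gt0 => [|a] // _.
  by rewrite arrn0 big_seq1 last_nseq /narr addn0 binn mulr1 mulfV // pnatr_eq0.
rewrite big_arr_split //= IHl ?IHr ?addnS ?addSn //.
rewrite [narr a.+1 b.+1]narrSl [narr a b.+1]narrSr [narr a.+1 b]narrSl.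
by rewrite !(addSn, addnS); nat_field a b.
Qed.

Lemma sum_same_ends a b : (0 < a)%N -> (0 < b)%N ->
  \sum_(s <- arr a b) (same_ends s)%:R =
  (a%:R * (a%:R - 1) + b%:R * (b%:R - 1)) / ((a + b)%:R * ((a + b)%:R - 1)) * narr a b.
Proof.
case: a => [|a] // _; case: b => [|b] // _.
rewrite big_arr_split //=.
have -> : \sum_(s <- arr a.+1 b) (last false s == false)%:R =
          narr a.+1 b - \sum_(s <- arr a.+1 b) (last false s)%:R.
  by rewrite -sum_arr1 -sumrB; apply: eq_bigr => s _; case: last.
under eq_bigr do rewrite eqb_id.
rewrite !sum_last ?addnS ?addSn //.
rewrite [narr a.+1 b.+1]narrSl [narr a b.+1]narrSr [narr a.+1 b]narrSl.
by rewrite !(addSn, addnS); nat_field a b.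
Qed.

Section UniformMoments.

Variables (T : finType) (A : {set T}).

Lemma eq_uexp (f g : T -> rat) : f =1 g -> uexp A f = uexp A g.
Proof. by move=> fg; rewrite /uexp (eq_bigr _ (fun t _ => fg t)). Qed.

Lemma eq_ucov (f f' g g' : T -> rat) : f =1 f' -> g =1 g' -> ucov A f g = ucov A f' g'.
Proof.
move=> ff' gg'; rewrite /ucov (eq_uexp ff') (eq_uexp gg').
by congr (_ - _); apply: eq_uexp => t; rewrite ff' gg'.
Qed.

Lemma ucovxx (x : T -> rat) : ucov A x x = uexp A (fun t => x t ^+ 2) - uexp A x ^+ 2.
Proof. by rewrite /ucov (@eq_uexp _ (fun t => x t ^+ 2)) // => t; rewrite expr2. Qed.

Lemma ucov_midpoints (x y : T -> rat) : A != set0 -> (forall t, y t ^+ 2 = y t) ->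
  ucov A (fun t => (x t + 1 - y t) / 2) (fun t => (x t + 1 + y t) / 2) =
  (ucov A x x - ucov A y y) / 4.
Proof.
move=> A_neq0 yy; have N_neq0 : #|A|%:R != 0 :> rat by rewrite pnatr_eq0 -lt0n card_gt0.
have Syy : \sum_(t in A) y t * y t = \sum_(t in A) y t.
  by apply: eq_bigr => t _; rewrite -expr2 yy.
have Sm : \sum_(t in A) (x t + 1 - y t) / 2 = (\sum_(t in A) x t + #|A|%:R - \sum_(t in A) y t) / 2.
  by rewrite -mulr_suml sumrB big_split sumr_const.
have SM : \sum_(t in A) (x t + 1 + y t) / 2 = (\sum_(t in A) x t + #|A|%:R + \sum_(t in A) y t) / 2.
  by rewrite -mulr_suml !big_split sumr_const.
have SmM : \sum_(t in A) (x t + 1 - y t) / 2 * ((x t + 1 + y t) / 2) =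
    (\sum_(t in A) x t * x t + 2 * \sum_(t in A) x t + #|A|%:R - \sum_(t in A) y t) / 4.
  transitivity (\sum_(t in A) (x t * x t + 2 * x t + 1 - y t) / 4).
    by apply: eq_bigr => t _; rewrite -[y t in RHS]yy; field.
  by rewrite -mulr_suml sumrB !big_split sumr_const -mulr_sumr.
rewrite /ucov /uexp Syy Sm SM SmM.
by field.
Qed.

Lemma ucov_indicator (y : T -> rat) : (forall t, y t ^+ 2 = y t) ->
  ucov A y y = uexp A y - uexp A y ^+ 2.
Proof. by move=> yy; rewrite ucovxx (eq_uexp yy). Qed.

End UniformMoments.

Lemma arrangements_neq0 a b : arrangements a b != set0.
Proof. by rewrite -card_gt0 card_arrangements bin_gt0 leq_addr. Qed.

Lemma uexp_arrangements (f : seq bool -> rat) a b :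
  uexp (arrangements a b) (fun t => f t) = (\sum_(s <- arr a b) f s) / narr a b.
Proof. by rewrite /uexp big_arrangements card_arrangements. Qed.

Lemma uexp_switches a b :
  uexp (arrangements a b) (fun t => (switches t)%:R) = 2 * a%:R * b%:R / (a + b)%:R.
Proof.
by rewrite (uexp_arrangements (fun s => (switches s)%:R)) sum_switches mulfK ?narr_neq0.
Qed.

Lemma uexp_switches_sq a b :
  uexp (arrangements a b) (fun t => (switches t)%:R ^+ 2) =
  2 * a%:R * b%:R * (2 * a%:R * b%:R - 1) / ((a + b)%:R * ((a + b)%:R - 1)).
Proof.
by rewrite (uexp_arrangements (fun s => (switches s)%:R ^+ 2)) sum_switches_sq mulfK ?narr_neq0.
Qed.

Lemma uexp_same_ends a b : (0 < a)%N -> (0 < b)%N ->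
  uexp (arrangements a b) (fun t => (same_ends t)%:R) =
  (a%:R * (a%:R - 1) + b%:R * (b%:R - 1)) / ((a + b)%:R * ((a + b)%:R - 1)).
Proof.
move=> a_gt0 b_gt0.
by rewrite (uexp_arrangements (fun s => (same_ends s)%:R)) sum_same_ends ?mulfK ?narr_neq0.
Qed.

Lemma Rmin_switches n (t : n.-tuple bool) : (0 < n)%N ->
  Rmin t = ((switches t)%:R + 1 - (same_ends t)%:R) / 2.
Proof.
move=> n_gt0; have /runs_min_max [min_eq _] : (0 < size t)%N by rewrite size_tuple.
by rewrite /Rmin [in RHS]natr1 -min_eq natrD addrK natrM mulfK.
Qed.

Lemma Rmax_switches n (t : n.-tuple bool) : (0 < n)%N ->
  Rmax t = ((switches t)%:R + 1 + (same_ends t)%:R) / 2.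
Proof.
move=> n_gt0; have /runs_min_max [_ max_eq] : (0 < size t)%N by rewrite size_tuple.
by rewrite /Rmax natr1 -natrD -max_eq natrM mulfK.
Qed.

Theorem theorem3 (n1 n2 : nat) (h1 : (1 <= n1)%N) (h2 : (1 <= n2)%N) :
  ucov (arrangements n1 n2) (@Rmin (n1 + n2)) (@Rmax (n1 + n2)) =
  (n1 * n2 * (n1 - 1) * (n2 - 1))%:R / ((n1 + n2) * (n1 + n2 - 1) ^ 2)%:R.
Proof.
have n_gt0 : (0 < n1 + n2)%N by rewrite addn_gt0 h1.
have same_ends_idem (t : (n1 + n2).-tuple bool) : (same_ends t)%:R ^+ 2 = (same_ends t)%:R :> rat.
  by case: same_ends; rewrite ?expr1n ?expr0n.
rewrite (eq_ucov _ (fun t => Rmin_switches t n_gt0) (fun t => Rmax_switches t n_gt0)).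
rewrite ucov_midpoints ?arrangements_neq0 // ucovxx ucov_indicator //.
rewrite uexp_switches uexp_switches_sq uexp_same_ends //.
have n1_ge1 : 1 <= n1%:R :> rat by rewrite ler1n.
have n2_ge1 : 1 <= n2%:R :> rat by rewrite ler1n.
rewrite !natrM !natrB ?addn_gt0 ?h1 // !natrD.
by field; do ?[apply/andP; split]; apply: lt0r_neq0; lra.
Qed.
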